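(* Let $I$ be an interval of a suitable and well-separated collection $\mathcal{I}$ (as in the context), regarded as a real interval $I=[a\pi/n,b\pi/n]\subseteq\mathbb{R}$ with integers $a<b$, and let $\theta_0\in\mathbb{R}$. (a) If $\theta_0\in I$, then $\frac43\le\int_I\frac{\sin(2n(\theta-\theta_0))}{\theta-\theta_0}\,d\theta\le4$. (b) If $\theta_0\notin I$, then $-1\le\int_I\frac{\sin(2n(\theta-\theta_0))}{\theta-\theta_0}\,d\theta\le2$.
   Context: $n$ is a positive integer and $\gamma$ is a constant with $0<\gamma\le 2^{-40}$. A collection $\mathcal{I}$ of pairwise disjoint intervals in $\mathbb{R}/2\pi\mathbb{Z}$ is suitable if (a) endpoints of each interval lie in $\frac{\pi}{n}\mathbb{Z}$; (b) $\mathcal{I}$ is invariant under $\theta\mapsto\pi+\theta$ and $\theta\mapsto\pi-\theta$; (c) $|\mathcal{I}|=4N$ for some integer $N\le\gamma n$. It is well-separated if moreover (d) $|I|\le6\pi/n$ for each $I\in\mathcal{I}$; (e) $d(I,J)\ge\pi/n$ for distinct $I,J\in\mathcal{I}$ (distance mod $2\pi$, infimum over points); (f) $\bigcup_{I\in\mathcal{I}}I$ is disjoint from $(\pi/2)\mathbb{Z}+[-100\pi/n,100\pi/n]$. At $\theta=\theta_0$ the integrand is interpreted as its continuous extension $2n$. *)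

From Stdlib Require Import Reals Lra Lia ZArith List.
From Coquelicot Require Import Coquelicot.
Open Scope R_scope.

(* A subset of R/2piZ is modelled as a 2pi-periodic predicate on R. *)
Definition arc (n : nat) (a b : Z) : R -> Prop :=
  fun th => exists k : Z,
    IZR a * PI / INR n <= th + 2 * PI * IZR k <= IZR b * PI / INR n.

Definition is_arc_of (n : nat) (I : R -> Prop) (a b : Z) : Prop :=
  (a < b)%Z /\ forall th, I th <-> arc n a b th.

(* A collection of intervals: a list of subsets of R/2piZ (its elements,
   listed once each; pairwise disjointness forces distinctness). *)
Definition suitable (n : nat) (gamma : R) (C : list (R -> Prop)) : Prop :=
  (forall I, In I C -> exists a b : Z, is_arc_of n I a b) /\
  (forall i j : nat, (i < length C)%nat -> (j < length C)%nat -> i <> j ->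
     forall th, ~ (nth i C (fun _ => False) th /\ nth j C (fun _ => False) th)) /\
  (forall I, In I C -> exists J, In J C /\ forall th, J th <-> I (th - PI)) /\
  (forall I, In I C -> exists J, In J C /\ forall th, J th <-> I (PI - th)) /\
  (exists N : nat, length C = (4 * N)%nat /\ INR N <= gamma * INR n).

Definition well_separated (n : nat) (gamma : R) (C : list (R -> Prop)) : Prop :=
  suitable n gamma C /\
  (forall I, In I C -> exists a b : Z, is_arc_of n I a b /\ (b - a <= 6)%Z) /\
  (forall i j : nat, (i < length C)%nat -> (j < length C)%nat -> i <> j ->
     forall x y, nth i C (fun _ => False) x -> nth j C (fun _ => False) y ->
     forall k : Z, PI / INR n <= Rabs (x - y + 2 * PI * IZR k)) /\
  (forall I, In I C -> forall th, I th ->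
     forall m : Z, 100 * PI / INR n < Rabs (th - IZR m * PI / 2)).

Definition kernel (n : nat) (th0 th : R) : R :=
  if Req_EM_T th th0 then 2 * INR n
  else sin (2 * INR n * (th - th0)) / (th - th0).

(** The substitution [u = 2n(θ - θ0)] turns the integral into [∫_A^B sin u / u du]
    over an interval of length [2(b - a)π ≥ 2π], with [A ≤ 0 ≤ B] exactly when
    [θ0 ∈ I].  The sine integral [Si x = ∫_0^x sin u / u du] satisfies
    [0 ≤ Si x ≤ 2] for [x ≥ 0] and [Si x ≥ 4/3] for [x ≥ π]: on [[0, 2π]] this
    follows from Taylor bounds for [sin] and the sign of [sin], beyond it from an
    integration by parts showing that the tail after a zero of [sin] has the
    appropriate sign.  If [A ≤ 0 ≤ B] the integral is [Si(-A) + Si B] and one of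
    [-A], [B] is at least [π]; otherwise it is [± (Si B' - Si A')] with
    [0 ≤ A' ≤ B'], which is at least [-1] because either [[A', B'] ⊆ [0, π]],
    where [sin u / u ≥ 0], or [Si B' ≥ 4/3]. *)

From Stdlib Require Import Reals ZArith List Lra Lia Machin.
From Coquelicot Require Import Coquelicot.
Open Scope R_scope.

Lemma PI_bounds : 3.14 <= PI <= 3.15.
Proof.
  pose proof (PI_2_3_7_ineq 1) as H.
  unfold tg_alt, PI_2_3_7_tg, Ratan_seq in H; simpl in H; lra.
Qed.

Lemma pow_PI_bounds k : 3.14 ^ k <= PI ^ k <= 3.15 ^ k.
Proof. pose proof PI_bounds; split; apply pow_incr; lra. Qed.

Lemma sin_lb_eq x : sin_lb x = x - x^3/6 + x^5/120 - x^7/5040.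
Proof.
  unfold sin_lb, sin_approx, sin_term; cbv [sum_f_R0 Nat.mul Nat.add].
  rewrite !fact_simpl, !mult_INR; simpl INR; field.
Qed.

Lemma sin_ub_eq x : sin_ub x = x - x^3/6 + x^5/120 - x^7/5040 + x^9/362880.
Proof.
  unfold sin_ub, sin_approx, sin_term; cbv [sum_f_R0 Nat.mul Nat.add].
  rewrite !fact_simpl, !mult_INR; simpl INR; field.
Qed.

Lemma is_RInt_antiderivative (G g : R -> R) a b :
  a <= b ->
  (forall x, a <= x <= b -> is_derive G x (g x)) ->
  (forall x, a <= x <= b -> continuous g x) ->
  is_RInt g a b (G b - G a).
Proof.
  intros Hab HG Hg.
  apply (is_RInt_derive (V := R_CompleteNormedModule));
    rewrite Rmin_left, Rmax_right by lra; assumption.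
Qed.

Lemma RInt_le_antiderivative (f G g : R -> R) a b :
  a <= b -> ex_RInt f a b ->
  (forall x, a <= x <= b -> is_derive G x (g x)) ->
  (forall x, a <= x <= b -> continuous g x) ->
  (forall x, a < x < b -> f x <= g x) ->
  RInt f a b <= G b - G a.
Proof.
  intros Hab Hf HG Hg Hfg.
  pose proof (is_RInt_antiderivative G g a b Hab HG Hg) as HgG.
  rewrite <- (is_RInt_unique g a b _ HgG).
  apply RInt_le; auto. eexists; exact HgG.
Qed.

Lemma RInt_ge_antiderivative (f G g : R -> R) a b :
  a <= b -> ex_RInt f a b ->
  (forall x, a <= x <= b -> is_derive G x (g x)) ->
  (forall x, a <= x <= b -> continuous g x) ->
  (forall x, a < x < b -> g x <= f x) ->
  G b - G a <= RInt f a b.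
Proof.
  intros Hab Hf HG Hg Hgf.
  pose proof (is_RInt_antiderivative G g a b Hab HG Hg) as HgG.
  rewrite <- (is_RInt_unique g a b _ HgG).
  apply RInt_le; auto. eexists; exact HgG.
Qed.

Definition sinc (x : R) : R := if Req_EM_T x 0 then 1 else sin x / x.

Lemma sinc_neq0 x : x <> 0 -> sinc x = sin x / x.
Proof. intros Hx; unfold sinc; destruct (Req_EM_T x 0); [contradiction | reflexivity]. Qed.

Lemma sinc_opp x : sinc (- x) = sinc x.
Proof.
  unfold sinc; destruct (Req_EM_T (- x) 0), (Req_EM_T x 0); try lra.
  rewrite sin_neg; field; assumption.
Qed.

Lemma continuous_sinc x : continuous sinc x.
Proof.
  destruct (Req_EM_T x 0) as [-> | Hx].
  - apply continuity_pt_filterlim.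
    intros eps Heps. destruct (derivable_pt_lim_sin 0 eps Heps) as [d Hd].
    exists d; split; [apply cond_pos |].
    intros y [[_ Hy0] Hyd]; simpl in *; unfold R_dist in *.
    rewrite sinc_neq0 by auto. unfold sinc; destruct (Req_EM_T 0 0); [| lra].
    rewrite Rminus_0_r in Hyd.
    specialize (Hd y (not_eq_sym Hy0) Hyd).
    rewrite Rplus_0_l, sin_0, cos_0, Rminus_0_r in Hd; exact Hd.
  - apply continuous_ext_loc with (g := fun y => sin y / y).
    + exists (mkposreal _ (Rabs_pos_lt x Hx)). intros y Hy.
      rewrite sinc_neq0; auto. intros ->.
      cbn in Hy; unfold AbsRing_ball, abs, minus, plus, opp in Hy; simpl in Hy.
      rewrite Rplus_0_l, Rabs_Ropp in Hy; lra.
    + apply (ex_derive_continuous (fun y => sin y / y)). auto_derive; auto.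
Qed.

Lemma ex_RInt_sinc a b : ex_RInt sinc a b.
Proof. apply (ex_RInt_continuous (V := R_CompleteNormedModule)); intros; apply continuous_sinc. Qed.

Lemma RInt_sinc_Chasles a b c : RInt sinc a b + RInt sinc b c = RInt sinc a c.
Proof. apply (RInt_Chasles sinc a b c); apply ex_RInt_sinc. Qed.

Lemma RInt_sinc_opp a b : RInt sinc a b = RInt sinc (- b) (- a).
Proof.
  pose proof (RInt_comp_lin sinc (-1) 0 a b (ex_RInt_sinc _ _)) as H.
  rewrite (RInt_ext _ (fun y => opp (sinc y))) in H.
  2: { intros x _. replace (-1 * x + 0) with (- x) by ring. rewrite sinc_opp.
       unfold scal, opp; simpl; unfold mult; simpl; ring. }
  rewrite (RInt_opp (V := R_CompleteNormedModule)) in H by apply ex_RInt_sinc.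
  replace (-1 * a + 0) with (- a) in H by ring.
  replace (-1 * b + 0) with (- b) in H by ring.
  rewrite <- (opp_RInt_swap (V := R_CompleteNormedModule) sinc (- b) (- a)) in H
    by apply ex_RInt_sinc.
  unfold opp in H; simpl in H; lra.
Qed.

Lemma RInt_sinc_ge0 a b : 0 <= a -> a <= b -> b <= PI -> 0 <= RInt sinc a b.
Proof.
  intros Ha Hab Hb. apply RInt_ge_0; auto using ex_RInt_sinc.
  intros x Hx. rewrite sinc_neq0 by lra.
  apply Rdiv_le_0_compat; [apply sin_ge_0 |]; lra.
Qed.

Lemma RInt_sinc_le0 a b : PI <= a -> a <= b -> b <= 2 * PI -> RInt sinc a b <= 0.
Proof.
  intros Ha Hab Hb. pose proof PI_RGT_0.
  enough (RInt sinc a b <= 0 - 0) by lra.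
  apply (RInt_le_antiderivative _ (fun _ => 0) (fun _ => 0)); auto using ex_RInt_sinc.
  - intros; auto_derive; auto.
  - intros; apply continuous_const.
  - intros x Hx. rewrite sinc_neq0 by lra.
    assert (sin x <= 0) by (apply sin_le_0; lra).
    assert (0 < / x) by (apply Rinv_0_lt_compat; lra).
    unfold Rdiv; nra.
Qed.

(* [sinc x = ((1 - cos x) / x)' + (1 - cos x) / x^2], and the last term is nonnegative. *)
Lemma RInt_sinc_tail_lb A B : 0 < A -> A <= B -> (cos A - 1) / A <= RInt sinc A B.
Proof.
  intros HA HAB.
  set (G := fun u => (1 - cos u) / u).
  set (g := fun u => sin u / u - (1 - cos u) / (u * u)).
  assert (HGB : 0 <= G B).
  { apply Rdiv_le_0_compat; [pose proof (COS_bound B) |]; lra. }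
  assert (HGA : (cos A - 1) / A = - G A) by (unfold G; field; lra).
  enough (G B - G A <= RInt sinc A B) by lra.
  apply (RInt_ge_antiderivative _ _ g); auto using ex_RInt_sinc.
  - intros x Hx. unfold G, g. auto_derive; [repeat split; intro; nra |].
    field; intro; nra.
  - intros x Hx. apply (ex_derive_continuous g). unfold g.
    auto_derive; repeat split; intro; nra.
  - intros x Hx. rewrite sinc_neq0 by lra. unfold g.
    assert (0 <= (1 - cos x) / (x * x)).
    { apply Rdiv_le_0_compat; [pose proof (COS_bound x) |]; nra. }
    lra.
Qed.

(* [sinc x = (-(1 + cos x) / x)' - (1 + cos x) / x^2], and the last term is nonpositive. *)
Lemma RInt_sinc_tail_ub A B : 0 < A -> A <= B -> RInt sinc A B <= (cos A + 1) / A.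
Proof.
  intros HA HAB.
  set (G := fun u => - (cos u + 1) / u).
  set (g := fun u => sin u / u + (1 + cos u) / (u * u)).
  assert (HGB : G B <= 0).
  { unfold G. replace (- (cos B + 1) / B) with (- ((cos B + 1) / B)) by (field; lra).
    enough (0 <= (cos B + 1) / B) by lra.
    apply Rdiv_le_0_compat; [pose proof (COS_bound B) |]; lra. }
  assert (HGA : (cos A + 1) / A = - G A) by (unfold G; field; lra).
  enough (RInt sinc A B <= G B - G A) by lra.
  apply (RInt_le_antiderivative _ _ g); auto using ex_RInt_sinc.
  - intros x Hx. unfold G, g. auto_derive; [repeat split; intro; nra |].
    field; intro; nra.
  - intros x Hx. apply (ex_derive_continuous g). unfold g.
    auto_derive; repeat split; intro; nra.
  - intros x Hx. rewrite sinc_neq0 by lra. unfold g.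
    assert (0 <= (1 + cos x) / (x * x)).
    { apply Rdiv_le_0_compat; [pose proof (COS_bound x) |]; nra. }
    lra.
Qed.

Lemma RInt_sinc_0_PI_le : RInt sinc 0 PI <= 2.
Proof.
  pose proof PI_bounds.
  set (q := fun x => 1 - x^2/6 + x^4/120 - x^6/5040 + x^8/362880).
  set (Q := fun x => x - x^3/18 + x^5/600 - x^7/35280 + x^9/3265920).
  apply Rle_trans with (Q PI - Q 0).
  - apply (RInt_le_antiderivative _ _ q); auto using ex_RInt_sinc; try lra.
    + intros x _. unfold Q, q. auto_derive; [auto | field].
    + intros x _. apply (ex_derive_continuous q). unfold q. auto_derive; auto.
    + intros x Hx. rewrite sinc_neq0 by lra. unfold q.
      destruct (SIN x ltac:(lra) ltac:(lra)) as [_ Hsin]. rewrite sin_ub_eq in Hsin.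
      replace (1 - x^2/6 + x^4/120 - x^6/5040 + x^8/362880)
        with ((x - x^3/6 + x^5/120 - x^7/5040 + x^9/362880) / x) by (field; lra).
      apply Rmult_le_compat_r; [apply Rlt_le, Rinv_0_lt_compat; lra | exact Hsin].
  - unfold Q. pose proof (pow_PI_bounds 3). pose proof (pow_PI_bounds 5).
    pose proof (pow_PI_bounds 7). pose proof (pow_PI_bounds 9). simpl in *. lra.
Qed.

Lemma RInt_sinc_0_PI_ge : 1.82 <= RInt sinc 0 PI.
Proof.
  pose proof PI_bounds.
  set (q := fun x => 1 - x^2/6 + x^4/120 - x^6/5040).
  set (Q := fun x => x - x^3/18 + x^5/600 - x^7/35280).
  apply Rle_trans with (Q PI - Q 0).
  - unfold Q. pose proof (pow_PI_bounds 3). pose proof (pow_PI_bounds 5).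
    pose proof (pow_PI_bounds 7). simpl in *. lra.
  - apply (RInt_ge_antiderivative _ _ q); auto using ex_RInt_sinc; try lra.
    + intros x _. unfold Q, q. auto_derive; [auto | field].
    + intros x _. apply (ex_derive_continuous q). unfold q. auto_derive; auto.
    + intros x Hx. rewrite sinc_neq0 by lra. unfold q.
      destruct (SIN x ltac:(lra) ltac:(lra)) as [Hsin _]. rewrite sin_lb_eq in Hsin.
      replace (1 - x^2/6 + x^4/120 - x^6/5040)
        with ((x - x^3/6 + x^5/120 - x^7/5040) / x) by (field; lra).
      apply Rmult_le_compat_r; [apply Rlt_le, Rinv_0_lt_compat; lra | exact Hsin].
Qed.

(* On [[π, 2π]], [sin x ≤ 0] and [1/x] lies below its chord [(3π - x) / (2π^2)]. *)
Lemma RInt_sinc_PI_2PI_ge : - 3 / (2 * PI) <= RInt sinc PI (2 * PI).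
Proof.
  pose proof PI_bounds.
  set (w := fun u => sin u * (3 * PI - u) / (2 * PI ^ 2)).
  set (W := fun u => (- (3 * PI - u) * cos u - sin u) / (2 * PI ^ 2)).
  replace (- 3 / (2 * PI)) with (W (2 * PI) - W PI)
    by (unfold W; rewrite cos_2PI, sin_2PI, cos_PI, sin_PI; field; lra).
  apply (RInt_ge_antiderivative _ _ w); auto using ex_RInt_sinc; try lra.
  - intros x _. unfold W, w. auto_derive; [lra | field; lra].
  - intros x _. apply (ex_derive_continuous w). unfold w. auto_derive; lra.
  - intros x Hx. rewrite sinc_neq0 by lra. unfold w.
    assert (Hs : sin x <= 0) by (apply sin_le_0; lra).
    assert (Hchord : / x <= (3 * PI - x) / (2 * PI ^ 2)).
    { apply (Rmult_le_reg_l (x * (2 * PI ^ 2))); [nra |].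
      replace (x * (2 * PI ^ 2) * / x) with (2 * PI ^ 2) by (field; lra).
      replace (x * (2 * PI ^ 2) * ((3 * PI - x) / (2 * PI ^ 2)))
        with (x * (3 * PI - x)) by (field; lra).
      nra. }
    unfold Rdiv in *.
    rewrite Rmult_assoc. apply Rmult_le_compat_neg_l; assumption.
Qed.

Lemma RInt_sinc_0_2PI_ge : 4 / 3 <= RInt sinc 0 (2 * PI).
Proof.
  pose proof PI_bounds. pose proof RInt_sinc_0_PI_ge. pose proof RInt_sinc_PI_2PI_ge.
  rewrite <- (RInt_sinc_Chasles 0 PI (2 * PI)).
  assert (3 / (2 * PI) <= 3 / (2 * 3.14)).
  { apply Rmult_le_compat_l; [lra |]. apply Rinv_le_contravar; lra. }
  unfold Rdiv in *. lra.
Qed.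

Lemma RInt_sinc_0_ge_4_3 u : PI <= u -> 4 / 3 <= RInt sinc 0 u.
Proof.
  intros Hu. pose proof PI_bounds. pose proof RInt_sinc_0_2PI_ge as H2PI.
  destruct (Rle_lt_dec u (2 * PI)).
  - rewrite <- (RInt_sinc_Chasles 0 u (2 * PI)) in H2PI.
    pose proof (RInt_sinc_le0 u (2 * PI) Hu ltac:(lra) ltac:(lra)). lra.
  - rewrite <- (RInt_sinc_Chasles 0 (2 * PI) u).
    pose proof (RInt_sinc_tail_lb (2 * PI) u ltac:(lra) ltac:(lra)) as Htail.
    rewrite cos_2PI, Rminus_diag, Rdiv_0_l in Htail. lra.
Qed.

Lemma RInt_sinc_0_ge0 u : 0 <= u -> 0 <= RInt sinc 0 u.
Proof.
  intros Hu. destruct (Rle_lt_dec u PI).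
  - apply RInt_sinc_ge0; lra.
  - pose proof (RInt_sinc_0_ge_4_3 u ltac:(lra)). lra.
Qed.

Lemma RInt_sinc_0_le2 u : 0 <= u -> RInt sinc 0 u <= 2.
Proof.
  intros Hu. pose proof PI_bounds. pose proof RInt_sinc_0_PI_le as HPI.
  destruct (Rle_lt_dec u PI).
  - rewrite <- (RInt_sinc_Chasles 0 u PI) in HPI.
    pose proof (RInt_sinc_ge0 u PI Hu r ltac:(lra)). lra.
  - rewrite <- (RInt_sinc_Chasles 0 PI u).
    pose proof (RInt_sinc_tail_ub PI u ltac:(lra) ltac:(lra)) as Htail.
    rewrite cos_PI in Htail. replace ((-1 + 1) / PI) with 0 in Htail by (field; lra).
    lra.
Qed.

Lemma RInt_sinc_straddle A B :
  A <= 0 -> 0 <= B -> 2 * PI <= B - A -> 4 / 3 <= RInt sinc A B <= 4.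
Proof.
  intros HA HB HAB.
  rewrite <- (RInt_sinc_Chasles A 0 B), (RInt_sinc_opp A 0), Ropp_0.
  pose proof (RInt_sinc_0_le2 (- A) ltac:(lra)). pose proof (RInt_sinc_0_le2 B HB).
  pose proof (RInt_sinc_0_ge0 (- A) ltac:(lra)). pose proof (RInt_sinc_0_ge0 B HB).
  destruct (Rle_lt_dec PI B).
  - pose proof (RInt_sinc_0_ge_4_3 B r). lra.
  - pose proof (RInt_sinc_0_ge_4_3 (- A) ltac:(lra)). lra.
Qed.

Lemma RInt_sinc_nonneg_side A B : 0 <= A -> A <= B -> -1 <= RInt sinc A B <= 2.
Proof.
  intros HA HAB.
  assert (HSi : RInt sinc A B = RInt sinc 0 B - RInt sinc 0 A)
    by (rewrite <- (RInt_sinc_Chasles 0 A B); simpl; lra).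
  pose proof (RInt_sinc_0_le2 A HA). pose proof (RInt_sinc_0_ge0 A HA).
  pose proof (RInt_sinc_0_le2 B ltac:(lra)). pose proof (RInt_sinc_0_ge0 B ltac:(lra)).
  split; [| lra].
  destruct (Rle_lt_dec B PI).
  - pose proof (RInt_sinc_ge0 A B HA HAB r). lra.
  - pose proof (RInt_sinc_0_ge_4_3 B ltac:(lra)). lra.
Qed.

Lemma RInt_sinc_one_side A B : A <= B -> 0 <= A \/ B <= 0 -> -1 <= RInt sinc A B <= 2.
Proof.
  intros HAB [HA | HB].
  - apply RInt_sinc_nonneg_side; assumption.
  - rewrite RInt_sinc_opp. apply RInt_sinc_nonneg_side; lra.
Qed.

Lemma kernel_sinc n th0 th : (0 < n)%nat ->
  kernel n th0 th = 2 * INR n * sinc (2 * INR n * th + - (2 * INR n * th0)).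
Proof.
  intros Hn. assert (HN : 0 < INR n) by (apply lt_0_INR; lia).
  replace (2 * INR n * th + - (2 * INR n * th0)) with (2 * INR n * (th - th0)) by ring.
  unfold kernel. destruct (Req_EM_T th th0) as [-> | Hne].
  - rewrite Rminus_diag, Rmult_0_r. unfold sinc; destruct (Req_EM_T 0 0); [ring | lra].
  - assert (th - th0 <> 0) by lra.
    rewrite sinc_neq0 by (apply Rmult_integral_contrapositive; split; lra).
    field; lra.
Qed.

Lemma RInt_kernel n th0 lo hi : (0 < n)%nat ->
  RInt (kernel n th0) lo hi
  = RInt sinc (2 * INR n * lo + - (2 * INR n * th0)) (2 * INR n * hi + - (2 * INR n * th0)).
Proof.
  intros Hn. rewrite <- RInt_comp_lin by apply ex_RInt_sinc.
  apply RInt_ext. intros x _. rewrite kernel_sinc by assumption. reflexivity.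
Qed.

Theorem lemma5p8 (n : nat) (gamma : R) (C : list (R -> Prop))
  (I : R -> Prop) (a b : Z) (th0 : R) :
  (0 < n)%nat ->
  0 < gamma -> gamma <= / 2 ^ 40 ->
  well_separated n gamma C ->
  In I C ->
  is_arc_of n I a b ->
  let lo := IZR a * PI / INR n in
  let hi := IZR b * PI / INR n in
  (lo <= th0 <= hi ->
     4 / 3 <= RInt (kernel n th0) lo hi <= 4) /\
  (~ (lo <= th0 <= hi) ->
     -1 <= RInt (kernel n th0) lo hi <= 2).
Proof.
  intros Hn _ _ _ _ [Hab _] lo hi.
  assert (HN : 0 < INR n) by (apply lt_0_INR; lia).
  pose proof PI_RGT_0.
  assert (Hba : IZR a + 1 <= IZR b) by (rewrite <- plus_IZR; apply IZR_le; lia).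
  rewrite RInt_kernel by assumption.
  set (A := 2 * INR n * lo + - (2 * INR n * th0)).
  set (B := 2 * INR n * hi + - (2 * INR n * th0)).
  assert (HA : A = 2 * INR n * (lo - th0)) by (unfold A; ring).
  assert (HB : B = 2 * INR n * (hi - th0)) by (unfold B; ring).
  assert (HBA : B - A = 2 * (IZR b - IZR a) * PI) by (unfold A, B, lo, hi; field; lra).
  split.
  - intros Hth0. apply RInt_sinc_straddle; nra.
  - intros Hth0. apply RInt_sinc_one_side; [nra |].
    destruct (Rle_lt_dec lo th0); [right | left]; nra.
Qed.
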